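(* Let $\mathcal{A}$ be a finite set of positive integers, let $w \leqslant z$ be real numbers, and let $m_1, m_2, m_3, m_4$ be real numbers with $(m_1, m_2) \in \mathcal{U}$ and $(m_3, m_4) \in \mathcal{U}$. Writing $M^r_4 = \sum_{1 \leqslant i_1 < \cdots < i_r \leqslant 4} m_{i_1}\cdots m_{i_r}$ and $P = m_1m_2m_3m_4$, we have $$ S(\mathcal{A}, z) \leqslant S(\mathcal{A}, w) - \frac{M^3_4 - M^2_4 + M^1_4 - 1}{P} \sum_{w \leqslant p_1 < z} S(\mathcal{A}_{p_1}, w) + \frac{2(M^2_4 - 3M^1_4 + 7)}{P} \sum_{w \leqslant p_2 < p_1 < z} S(\mathcal{A}_{p_1p_2}, w) $$ $$ - \frac{6(M^1_4 - 6)}{P} \sum_{w \leqslant p_3 < p_2 < p_1 < z} S(\mathcal{A}_{p_1p_2p_3}, w) + \frac{24}{P} \sum_{w \leqslant p_4 < p_3 < p_2 < p_1 < z} S(\mathcal{A}_{p_1p_2p_3p_4}, w). $$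
   Context: Throughout, $p, p_1, p_2, \dots$ denote prime numbers. For a finite set $\mathcal{A}$ of positive integers and a positive integer $d$, $\mathcal{A}_d = \{a : ad \in \mathcal{A}\}$. For real $z$, $S(\mathcal{A}, z)$ denotes the number of $a \in \mathcal{A}$ having no prime factor less than $z$. Let $T = (0,1] \cup [2,3] \cup [4,5] \cup \cdots$, i.e. $T$ is the union of $(0,1]$ and the intervals $[k-1,k]$ over all odd integers $k \geqslant 3$, and let $\mathcal{U} = \{(x_1, x_2) : x_1, x_2 \in T,\ |x_1 - x_2| \leqslant 1\}$. *)

From HB Require Import structures.
From mathcomp Require Import all_boot all_order all_algebra.
From mathcomp Require Import finmap.
From mathcomp Require Import reals.
Set Implicit Arguments. Unset Strict Implicit. Unset Printing Implicit Defensive.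
Import Order.TTheory GRing.Theory Num.Theory.
Local Open Scope ring_scope.
Local Open Scope fset_scope.

(* A_d = { a : a d \in A } (for d > 0; elements of A_d are exactly b %/ d for b in A with d | b) *)
Definition subA (A : {fset nat}) (d : nat) : {fset nat} :=
  [fset (b %/ d)%N | b in A & (d %| b)%N].

Definition S {R : realType} (A : {fset nat}) (z : R) : nat :=
  #|` [fset a in A | ~~ has (fun p : nat => p%:R < z) (primes a)] |.

Definition primes_between {R : realType} (w z : R) : seq nat :=
  [seq p <- iota 0 (Num.truncn z).+1 | prime p && (w <= p%:R) && (p%:R < z)].

Definition inT {R : realType} (x : R) : Prop :=
  (0 < x <= 1) \/ exists k : nat, odd k /\ (3 <= k)%N /\ (k.-1)%:R <= x <= k%:R.

Definition inU {R : realType} (x1 x2 : R) : Prop :=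
  inT x1 /\ inT x2 /\ `|x1 - x2| <= 1.

From HB Require Import structures.
From mathcomp Require Import all_boot all_order all_algebra.
From mathcomp Require Import finmap.
From mathcomp Require Import reals.
From mathcomp Require Import lra zify ring.
Set Implicit Arguments. Unset Strict Implicit. Unset Printing Implicit Defensive.
Import Order.TTheory GRing.Theory Num.Theory.
Local Open Scope ring_scope.

(* Count the contribution of each a in A to both sides. If a has a prime factor
   below w it contributes nothing, since dividing a by primes >= w keeps that
   factor. Otherwise let N be the number of primes of [w, z) dividing a: then a
   contributes 'C(N, k) to the k-fold sum, so its total weight on the right is
   (N - m1)(N - m2)(N - m3)(N - m4) / P, the coefficients of the statement being
   those of this quartic in the basis 'C(N, k). The weight is 1 for N = 0, and it
   is nonnegative for every natural N because no integer lies strictly between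
   the two coordinates of a point of U; for N > 0, a has a prime factor below z
   and contributes nothing to the left. *)

Lemma coprime_neq_primes p q : prime p -> prime q -> p != q -> coprime p q.
Proof. by move=> pp pq; rewrite prime_coprime // dvdn_prime2. Qed.

Fixpoint chains_below (s : seq nat) (k p : nat) : nat :=
  if k is k'.+1 then (\sum_(q <- s | q < p) chains_below s k' q)%N else 1%N.

Lemma chains_below_rcons s x k p :
  (p <= x)%N -> chains_below (rcons s x) k p = chains_below s k p.
Proof.
elim: k p => [|k IHk] p px //=.
rewrite big_rcons ltnNge px /= addn0; apply: eq_bigr => q qp.
exact/IHk/(leq_trans (ltnW qp) px).
Qed.

Lemma sum_chains_below s k :
  sorted ltn s -> (\sum_(p <- s) chains_below s k p)%N = 'C(size s, k.+1).
Proof.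
elim/last_ind: s k => [|s x IHs] k; first by rewrite big_nil.
rewrite (sorted_pairwise ltn_trans) pairwise_rcons -(sorted_pairwise ltn_trans).
case/andP=> /allP s_lt_x sorted_s.
case: k => [|k]; first by rewrite sum1_size bin1.
rewrite big_rcons size_rcons binS -!IHs //; congr (_ + _)%N.
  rewrite !big_seq; apply: eq_bigr => p /s_lt_x px.
  exact: chains_below_rcons (ltnW px).
rewrite /= big_rcons ltnn /= addn0 big_seq_cond [RHS]big_seq.
apply: eq_big => [q | q /andP[_ qx]]; first by case: (boolP (q \in s)) => // /s_lt_x ->.
exact: chains_below_rcons (ltnW qx).
Qed.

Section ChainSums.
Variable R : nzSemiRingType.

Fixpoint chain_sum_below (s : seq nat) (F : nat -> R) (k p d : nat) : R :=
  if k is k'.+1 then \sum_(q <- s | (q < p)%N) chain_sum_below s F k' q (d * q) else F d.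

(* [chain_sum s F k] sums [F (p * q_1 * ... * q_k)] over the chains
   [p > q_1 > ... > q_k] of elements of [s], i.e. over (k + 1)-chains; the
   product is accumulated from the left so that it is syntactically the one of
   the statement. *)
Definition chain_sum (s : seq nat) (F : nat -> R) (k : nat) : R :=
  \sum_(p <- s) chain_sum_below s F k p p.

Lemma chain_sum_below_sum I (r : seq I) (G : I -> nat -> R) s F k p d :
  (forall e, F e = \sum_(i <- r) G i e) ->
  chain_sum_below s F k p d = \sum_(i <- r) chain_sum_below s (G i) k p d.
Proof.
move=> FG; elim: k p d => [|k IHk] p d /=; first exact: FG.
by rewrite exchange_big; apply: eq_bigr => q _; apply: IHk.
Qed.

Lemma chain_sum_sum I (r : seq I) (G : I -> nat -> R) s F k :
  (forall e, F e = \sum_(i <- r) G i e) ->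
  chain_sum s F k = \sum_(i <- r) chain_sum s (G i) k.
Proof.
move=> FG; rewrite /chain_sum exchange_big; apply: eq_bigr => p _.
exact: chain_sum_below_sum.
Qed.

Section Multiplicative.
Variables (s : seq nat) (F : nat -> R) (D : pred nat).
Hypothesis s_prime : forall p, p \in s -> prime p.
Hypothesis FM : forall e q, q \in s -> coprime e q -> F (e * q)%N = F e * (D q)%:R.

Lemma chain_sum_below_mul k p d :
  (forall q, q \in s -> (q < p)%N -> coprime d q) ->
  chain_sum_below s F k p d = F d * (chains_below [seq q <- s | D q] k p)%:R.
Proof.
elim: k p d => [|k IHk] p d cop /=; first by rewrite mulr1.
rewrite natr_sum big_filter_cond mulr_sumr big_mkcondl.
rewrite big_seq_cond [RHS]big_seq_cond; apply: eq_bigr => q /andP[qs qp].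
rewrite IHk ?FM ?cop //; last first.
  move=> q' q's q'q; rewrite coprimeMl cop ?(ltn_trans q'q) //=.
  by rewrite coprime_neq_primes ?s_prime ?gtn_eqF.
by case: (D q); rewrite ?mulr1 ?mulr0 ?mul0r.
Qed.

Lemma chain_sum_mul k :
  sorted ltn s -> chain_sum s F k = F 1%N * ('C(count D s, k.+1))%:R.
Proof.
move=> sorted_s; rewrite -size_filter -sum_chains_below; last first.
  by apply: sorted_filter => //; exact: ltn_trans.
rewrite /chain_sum natr_sum big_filter mulr_sumr [RHS]big_mkcond.
rewrite big_seq [RHS]big_seq; apply: eq_bigr => p ps.
have Fp : F p = F 1%N * (D p)%:R by rewrite -FM ?mul1n ?coprime1n.
rewrite chain_sum_below_mul => [|q qs qp]; last first.
  by rewrite coprime_neq_primes ?s_prime ?gtn_eqF.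
by rewrite Fp; case: (D p); rewrite ?mulr1 ?mulr0 ?mul0r.
Qed.
End Multiplicative.
End ChainSums.

Lemma natr_count (R : nzSemiRingType) (T : Type) (P : pred T) (s : seq T) :
  (count P s)%:R = \sum_(x <- s) (P x)%:R :> R.
Proof. by rewrite -sum1_count natr_sum big_mkcond; apply: eq_bigr => x _; case: (P x). Qed.

Lemma natr_bin_fact (R : comNzRingType) n k :
  ('C(n, k) * k`!)%:R = \prod_(i < k) (n%:R - i%:R) :> R.
Proof.
rewrite bin_ffact ffact_prod natr_prod; case: (leqP k n) => [kn | nk].
  by apply: eq_bigr => i _; rewrite natrB // ltnW // (leq_trans (ltn_ord i) kn).
by rewrite (bigD1 (Ordinal nk)) // [RHS](bigD1 (Ordinal nk)) //= subnn subrr !mul0r.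
Qed.

Section Rough.
Variable R : realDomainType.

Definition rough (y : R) (a : nat) : bool := ~~ has (fun p : nat => p%:R < y) (primes a).

Lemma roughM y m n : (0 < m)%N -> (0 < n)%N ->
  rough y (m * n) = rough y m && rough y n.
Proof.
move=> m0 n0; rewrite /rough -negb_or -has_cat.
by congr (~~ _); apply: eq_has_r => p; rewrite mem_cat primesM.
Qed.

Lemma rough_prime y p : prime p -> y <= p%:R -> rough y p.
Proof. by move=> pp yp; rewrite /rough primes_prime //= ltNge yp. Qed.

Lemma rough_le y y' a : y <= y' -> rough y' a -> rough y a.
Proof.
move=> yy; apply: contra => /hasP[p pa py]; apply/hasP; exists p => //.
exact: lt_le_trans yy.
Qed.

Lemma rough_divM y b e q : (0 < b)%N -> prime q -> y <= q%:R -> coprime e q ->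
  ((e * q %| b)%N && rough y (b %/ (e * q))) = [&& (e %| b)%N, rough y (b %/ e) & (q %| b)%N].
Proof.
move=> b0 pq yq eq.
case qb: (q %| b)%N; last first.
  by rewrite !andbF; apply: contraFF qb => /andP[/(dvdn_trans (dvdn_mull e (dvdnn q)))].
rewrite andbT Gauss_dvd // qb andbT; case eb: (e %| b)%N => //=.
have eqb : (e * q %| b)%N by rewrite Gauss_dvd // eb qb.
have qbe : (q %| b %/ e)%N by rewrite dvdn_divRL // mulnC.
have bq0 : (0 < b %/ (e * q))%N by move: b0; case: (b %/ (e * q))%N (divnK eqb) => // <-.
rewrite -[(b %/ e)%N](divnK qbe) -divnMA roughM ?(prime_gt0 pq) //.
by rewrite (rough_prime pq yq) andbT.
Qed.
End Rough.

Section SieveSums.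
Variable R : realType.

Lemma S_count (X : {fset nat}) (y : R) : S X y = count (rough y) X.
Proof. by rewrite /S card_imfset //= size_filter. Qed.

Lemma S_subA (A : {fset nat}) d (y : R) :
  S (subA A d) y = count (fun b => (d %| b)%N && rough y (b %/ d)) A.
Proof.
rewrite /S /subA.
have -> : [fset a in [fset (b %/ d)%N | b in A & (d %| b)%N] | rough y a]%fset =
   [fset (b %/ d)%N | b in A & (d %| b)%N && rough y (b %/ d)]%fset.
  apply/fsetP => x; rewrite inE /=; apply/andP/imfsetP.
    move=> [/imfsetP [b /= /andP[hb hd] ->] hn]; exists b => //=.
    by rewrite inE /= hb hd.
  move=> [b /= /andP[hb /andP[hd hn]] ->]; split => //.
  by apply/imfsetP; exists b => //=; rewrite inE /= hb.
rewrite card_in_imfset /= ?size_filter //.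
move=> b1 b2 /andP[_ /andP[h1 _]] /andP[_ /andP[h2 _]] /= e.
by rewrite -(divnK h1) -(divnK h2) e.
Qed.

Definition sieve_sum (A : {fset nat}) (w : R) (s : seq nat) (k : nat) : R :=
  chain_sum s (fun d => (S (subA A d) w)%:R) k.

Lemma sieve_sumE (A : {fset nat}) (w : R) (s : seq nat) k :
  (forall b, b \in A -> (0 < b)%N) -> sorted ltn s ->
  (forall p, p \in s -> prime p && (w <= p%:R)) ->
  sieve_sum A w s k = \sum_(b <- A) (rough w b)%:R * ('C(count (dvdn^~ b) s, k.+1))%:R.
Proof.
move=> A_gt0 sorted_s s_prime; rewrite /sieve_sum.
rewrite (chain_sum_sum (r := A) (G := fun b d => ((d %| b)%N && rough w (b %/ d))%:R))
  => [|d]; last by rewrite S_subA natr_count.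
rewrite big_seq [RHS]big_seq; apply: eq_bigr => b bA.
rewrite (chain_sum_mul (D := dvdn^~ b)) ?dvd1n ?divn1 // => [p /s_prime /andP[] //|].
by move=> e q /s_prime /andP[pq wq] eq; rewrite rough_divM ?A_gt0 // andbA -mulnb natrM.
Qed.
End SieveSums.

Section Weights.
Variable R : realType.

Lemma inT_gt0 (x : R) : inT x -> 0 < x.
Proof.
case=> [/andP[] // | [k [_ [k3 /andP[kx _]]]]].
by apply: lt_le_trans kx; rewrite ltr0n; lia.
Qed.

Lemma inT_odd_bounds (x : R) : inT x -> exists2 k, odd k & (k.-1)%:R <= x <= k%:R.
Proof.
case=> [/andP[x0 x1] | [k [ok [_ xk]]]]; last by exists k.
by exists 1%N => //; rewrite /= x1 ltW.
Qed.

Lemma inU_sym (x1 x2 : R) : inU x1 x2 -> inU x2 x1.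
Proof. by case=> [T1 [T2 d12]]; do !split => //; rewrite distrC. Qed.

Lemma inU_nat_between (x1 x2 : R) n : inU x1 x2 -> x1 < n%:R -> n%:R < x2 -> False.
Proof.
(* With x1 in [k - 1, k], the distance bound forces n = k, and the component of
   T following [k - 1, k] starts at k + 1. *)
move=> [/inT_odd_bounds[k ok /andP[k1x1 x1k]] [/inT_odd_bounds[j oj /andP[j1x2 x2j]] d12]].
move=> x1n nx2.
have x21 : x2 - x1 <= 1 by apply: le_trans (ler_norm _) _; rewrite distrC.
have kn : (k.-1 < n)%N by rewrite -(ltr_nat R); apply: le_lt_trans x1n.
have nk : (n < k.+1)%N by rewrite -(ltr_nat R) -natr1; lra.
have nj : (n < j)%N by rewrite -(ltr_nat R); apply: lt_le_trans x2j.
have jn1 : j != n.+1 by apply: contraTneq oj => ->; rewrite /= negbK; have -> : n = k by lia.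
have : (n.+1 <= j.-1)%N by lia.
by rewrite -(ler_nat R) -natr1; lra.
Qed.

Lemma inU_mul_ge0 (x1 x2 : R) n : inU x1 x2 -> 0 <= (n%:R - x1) * (n%:R - x2).
Proof.
wlog x12 : x1 x2 / x1 <= x2 => [hwlog U|].
  case: (lerP x1 x2) => [/hwlog|/ltW /hwlog]; first exact.
  by rewrite mulrC; apply; apply: inU_sym.
move=> U; case: (lerP n%:R x1) => [nx1 | x1n].
  by apply: mulr_le0; rewrite subr_le0 // (le_trans nx1).
case: (lerP x2 n%:R) => [x2n | nx2]; last by case: (inU_nat_between U x1n nx2).
by apply: mulr_ge0; rewrite subr_ge0 // (le_trans x12).
Qed.

Variables m1 m2 m3 m4 : R.
Local Notation M1 := (m1 + m2 + m3 + m4).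
Local Notation M2 := (m1 * m2 + m1 * m3 + m1 * m4 + m2 * m3 + m2 * m4 + m3 * m4).
Local Notation M3 := (m1 * m2 * m3 + m1 * m2 * m4 + m1 * m3 * m4 + m2 * m3 * m4).
Local Notation P := (m1 * m2 * m3 * m4).
Local Notation weight n := (1 - (M3 - M2 + M1 - 1) / P * ('C(n, 1))%:R
  + 2 * (M2 - 3 * M1 + 7) / P * ('C(n, 2))%:R - 6 * (M1 - 6) / P * ('C(n, 3))%:R
  + 24 / P * ('C(n, 4))%:R).

Lemma weight_factor n : P != 0 ->
  weight n = (n%:R - m1) * (n%:R - m2) * (n%:R - m3) * (n%:R - m4) / P.
Proof.
move=> P0.
have binE k : ('C(n, k))%:R = \prod_(i < k) (n%:R - i%:R) / (k`!)%:R :> R.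
  by rewrite -natr_bin_fact natrM mulfK // pnatr_eq0 -lt0n fact_gt0.
rewrite !binE !big_ord_recr big_ord0 /= !factS fact0 !natrM; field.
by move: P0; rewrite !mulf_eq0 !negb_or => /andP[/andP[/andP[-> ->] ->] ->].
Qed.

Lemma weight0 : P != 0 -> weight 0 = 1.
Proof. by move=> P0; rewrite weight_factor // !sub0r !mulrN !mulNr !opprK divff. Qed.

Lemma weight_ge0 n : inU m1 m2 -> inU m3 m4 -> 0 <= weight n.
Proof.
move=> U12 U34; have [[T1 [T2 _]] [T3 [T4 _]]] := (U12, U34).
have P0 : 0 < P by rewrite !mulr_gt0 ?inT_gt0.
rewrite weight_factor ?gt_eqF //; apply: divr_ge0; last exact: ltW.
by rewrite -mulrA mulr_ge0 ?inU_mul_ge0.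
Qed.

Lemma rough_le_weight (w z : R) (s : seq nat) b : (0 < b)%N -> w <= z ->
  (forall p, p \in s -> [&& prime p, w <= p%:R & p%:R < z]) -> inU m1 m2 -> inU m3 m4 ->
  (rough z b)%:R <= (rough w b)%:R * weight (count (dvdn^~ b) s).
Proof.
move=> b0 wz s_ok U12 U34; have [[T1 [T2 _]] [T3 [T4 _]]] := (U12, U34).
case rwb: (rough w b); last by rewrite (contraFF (rough_le wz) rwb) mul0r.
rewrite mul1r; case Nb: (count _ s) => [|n].
  by rewrite weight0 ?lern1 ?leq_b1 // !mulf_neq0 ?gt_eqF ?inT_gt0.
have -> : rough z b = false.
  have /hasP[p ps pb] : has (dvdn^~ b) s by rewrite has_count Nb.
  case/and3P: (s_ok p ps) => pp _ pz.
  by apply/negbTE; rewrite negbK; apply/hasP; exists p; rewrite // mem_primes pp b0.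
exact: weight_ge0.
Qed.

Lemma sieve_upper_bound (A : {fset nat}) (w z : R) (s : seq nat) :
  (forall b, b \in A -> (0 < b)%N) -> w <= z -> inU m1 m2 -> inU m3 m4 ->
  sorted ltn s -> (forall p, p \in s -> [&& prime p, w <= p%:R & p%:R < z]) ->
  (S A z)%:R <= (S A w)%:R - (M3 - M2 + M1 - 1) / P * sieve_sum A w s 0
    + 2 * (M2 - 3 * M1 + 7) / P * sieve_sum A w s 1
    - 6 * (M1 - 6) / P * sieve_sum A w s 2 + 24 / P * sieve_sum A w s 3.
Proof.
move=> A_gt0 wz U12 U34 sorted_s s_ok.
have s_prime p : p \in s -> prime p && (w <= p%:R) by case/s_ok/and3P => -> ->.
rewrite !sieve_sumE // !S_count !natr_count !mulr_sumr.
rewrite -sumrB -big_split -sumrB -big_split /= big_seq [leRHS]big_seq.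
apply: ler_sum => b bA; apply: le_trans (rough_le_weight (A_gt0 b bA) wz s_ok U12 U34) _.
by rewrite le_eqVlt; apply/orP; left; apply/eqP; ring.
Qed.
End Weights.

Lemma primes_between_sorted (R : realType) (w z : R) : sorted ltn (primes_between w z).
Proof. by apply: sorted_filter; [exact: ltn_trans | exact: iota_ltn_sorted]. Qed.

Lemma mem_primes_between (R : realType) (w z : R) p :
  p \in primes_between w z -> [&& prime p, w <= p%:R & p%:R < z].
Proof. by rewrite mem_filter -!andbA => /and4P[-> -> ->]. Qed.

Theorem theorem3 (R : realType) (A : {fset nat}) (w z m1 m2 m3 m4 : R) :
  (forall a, a \in A -> (0 < a)%N) ->
  w <= z ->
  inU m1 m2 -> inU m3 m4 ->
  let M1 := m1 + m2 + m3 + m4 in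
  let M2 := m1 * m2 + m1 * m3 + m1 * m4 + m2 * m3 + m2 * m4 + m3 * m4 in
  let M3 := m1 * m2 * m3 + m1 * m2 * m4 + m1 * m3 * m4 + m2 * m3 * m4 in
  let P := m1 * m2 * m3 * m4 in
  let PS := primes_between w z in
  (S A z)%:R <=
    (S A w)%:R
    - (M3 - M2 + M1 - 1) / P *
        \sum_(p1 <- PS) (S (subA A p1) w)%:R
    + 2 * (M2 - 3 * M1 + 7) / P *
        \sum_(p1 <- PS) \sum_(p2 <- PS | (p2 < p1)%N)
          (S (subA A (p1 * p2)) w)%:R
    - 6 * (M1 - 6) / P *
        \sum_(p1 <- PS) \sum_(p2 <- PS | (p2 < p1)%N) \sum_(p3 <- PS | (p3 < p2)%N)
          (S (subA A (p1 * p2 * p3)) w)%:R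
    + 24 / P *
        \sum_(p1 <- PS) \sum_(p2 <- PS | (p2 < p1)%N) \sum_(p3 <- PS | (p3 < p2)%N)
          \sum_(p4 <- PS | (p4 < p3)%N)
          (S (subA A (p1 * p2 * p3 * p4)) w)%:R.
Proof.
move=> A_gt0 wz U12 U34.
apply: sieve_upper_bound => //; [exact: primes_between_sorted | exact: mem_primes_between].
Qed.
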